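(* Let $\mathfrak{g}$ be a nice nilpotent Lie algebra of dimension $n$ with nice diagram $\Delta$, $m$ arrows, and structure constants $c\in\mathbb{R}^m$, and let $k\in\mathbb{R}$ and $\delta\in(\mathbb{Z}_2)^n$. Then $\mathfrak{g}$ has a diagonal metric $g=\sum_i g_i e^i\otimes e^i$ with $\operatorname{logsign} g=\delta$ whose Ricci operator satisfies $\operatorname{Ric}=\frac12 k\,\mathrm{id}$ if and only if there exists $X\in\mathbb{R}^m$ such that: (K) $M_\Delta^{T}X=[k]$; (H) $X$ does not belong to any coordinate hyperplane, i.e. all entries of $X$ are nonzero; (L) $\operatorname{logsign} X=M_{\Delta,2}\,\delta$; (P) for a basis $\alpha_1,\dots,\alpha_r$ of $\ker M_\Delta^{T}\subset\mathbb{R}^m$, one has $\lvert X\rvert^{\alpha_i}=\lvert c\rvert^{2\alpha_i}$ for $i=1,\dots,r$.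
   Context: A nice basis of a real Lie algebra $\mathfrak{g}$ is a basis $\{e_1,\dots,e_n\}$ with dual basis $\{e^1,\dots,e^n\}$ such that each bracket $[e_i,e_j]$ is a multiple of some $e_h$ and each contraction $e_i\lrcorner\,de^j$ is a multiple of some $e^h$ (here $d$ is the Chevalley–Eilenberg differential, $de^k(x,y)=-e^k([x,y])$); a nice Lie algebra is a Lie algebra with a fixed nice basis. For a nice nilpotent Lie algebra, the nice diagram $\Delta$ has nodes $1,\dots,n$ and an arrow $i\xrightarrow{j}k$ (from $i$ to $k$, labelled by $j$) whenever $e_k$ is a nonzero multiple of $[e_i,e_j]$. Let $\mathcal I_\Delta$ be the set of triples $\{\{i,j\},k\}$ for which $i\xrightarrow{j}k$ is an arrow, $m=\lvert\mathcal I_\Delta\rvert$, ordered lexicographically by $(k,i,j)$ with $i<j$. The structure constants are the vector $c=(c_{ijk})\in\mathbb{R}^m$ (indexed by $\mathcal I_\Delta$, $i<j$) with $de^k=\sum c_{ijk}e^{i}\wedge e^{j}$; all its entries are nonzero. The root matrix $M_\Delta$ is the $m\times n$ integer matrix whose row indexed by $\{\{i,j\},k\}$ has entry $1$ in column $k$, entry $-1$ in columns $i$ and $j$, and $0$ elsewhere; $M_{\Delta,2}\colon(\mathbb{Z}_2)^n\to(\mathbb{Z}_2)^m$ is its reduction mod 2. For $x\in\mathbb{R}\setminus\{0\}$, $\operatorname{logsign}x=0$ if $x>0$ and $1$ if $x<0$; for a vector it is applied componentwise, and for a diagonal metric $\operatorname{logsign} g=(\operatorname{logsign} g_i)_i$.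 A diagonal metric is a nondegenerate (possibly indefinite) scalar product on $\mathfrak{g}$ for which the nice basis is orthogonal; $\operatorname{Ric}$ denotes the Ricci operator of the corresponding left-invariant pseudoriemannian metric. $[k]\in\mathbb{R}^n$ is the vector with all entries $k$. For $X,\alpha\in\mathbb{R}^m$, $\lvert X\rvert^\alpha=\prod_j\lvert x_j\rvert^{\alpha_j}$. *)

From HB Require Import structures.
From mathcomp Require Import all_boot all_order all_algebra.
From mathcomp Require Import reals exp.
Set Implicit Arguments. Unset Strict Implicit. Unset Printing Implicit Defensive.
Import Order.TTheory GRing.Theory Num.Theory.
Local Open Scope ring_scope.

Section NiceLie.
Variable R : realType.
Variable n : nat.
(* Lie bracket in the basis e_0..e_{n-1}:  [e_i, e_j] = \sum_k C i j k e_k. *)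
Variable C : 'I_n -> 'I_n -> 'I_n -> R.

Definition is_lie : Prop :=
  (forall i j l, C i j l = - C j i l) /\
  (forall i j k p, \sum_l (C i j l * C l k p + C j k l * C l i p + C k i l * C l j p) = 0).

Definition lieb (x y : 'rV[R]_n) : 'rV[R]_n :=
  \row_l \sum_i \sum_j x 0 i * y 0 j * C i j l.

Definition nilpotent_lie : Prop :=
  exists N : nat, forall (xs : seq 'rV[R]_n) (y : 'rV[R]_n),
    size xs = N -> foldr lieb y xs = 0.

(* the basis is nice: each [e_i,e_j] is a multiple of some e_h, and each
   e_i _| de^k = - \sum_j C i j k e^j  is a multiple of some e^h *)
Definition nice_basis : Prop :=
  (forall i j, exists h, forall l, l != h -> C i j l = 0) /\
  (forall i l, exists h, forall j, j != h -> C i j l = 0).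

(* Arrows of the nice diagram, as triples ((k, i), j) with i < j and
   e_k a nonzero multiple of [e_i,e_j]; enumerated lexicographically in (k,i,j). *)
Definition arrows : seq (('I_n * 'I_n) * 'I_n) :=
  filter (fun t : ('I_n * 'I_n) * 'I_n => (t.1.2 < t.2)%N && (C t.1.2 t.2 t.1.1 != 0))
         (enum {: ('I_n * 'I_n) * 'I_n}).

Definition m_arrows : nat := size arrows.

Definition arrow (a : 'I_m_arrows) : ('I_n * 'I_n) * 'I_n := tnth (in_tuple arrows) a.

Definition root_mx_int : 'M[int]_(m_arrows, n) :=
  \matrix_(a, l) (((l == (arrow a).1.1)%:R - (l == (arrow a).1.2)%:R
                   - (l == (arrow a).2)%:R) : int).

Definition root_mx : 'M[R]_(m_arrows, n) := map_mx (fun z : int => z%:~R) root_mx_int.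

Definition root_mx2 : 'M['F_2]_(m_arrows, n) := map_mx (fun z : int => z%:~R) root_mx_int.

(* structure constants: de^k = \sum_{i<j} c_{ijk} e^i /\ e^j, with
   de^k(x,y) = - e^k([x,y]) and (e^i /\ e^j)(e_i,e_j) = 1, so c_{ijk} = - C i j k *)
Definition struct_const : 'cV[R]_m_arrows :=
  \col_a (- C (arrow a).1.2 (arrow a).2 (arrow a).1.1).

Variable g : 'I_n -> R.   (* g = \sum_i g_i e^i (x) e^i *)

(* nabla_{e_i} e_j = \sum_l Gamma i j l e_l, from the Koszul formula
   2 g(nabla_X Y, Z) = g([X,Y],Z) - g([Y,Z],X) + g([Z,X],Y) *)
Definition christoffel (i j l : 'I_n) : R :=
  (C i j l * g l - C j l i * g i + C l i j * g j) / (2 * g l).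

(* R(e_a,e_b) e_c = \sum_d riem a b c d e_d, with
   R(X,Y) = nabla_X nabla_Y - nabla_Y nabla_X - nabla_[X,Y] *)
Definition riem (a b c d : 'I_n) : R :=
  \sum_l (christoffel b c l * christoffel a l d - christoffel a c l * christoffel b l d
          - C a b l * christoffel l c d).

Definition ric (b c : 'I_n) : R := \sum_a riem a b c a.

(* Ricci operator: g(Ric Y, Z) = ric(Y, Z); column b is Ric e_b *)
Definition ricci_op : 'M[R]_n := \matrix_(c, b) (ric b c / g c).

End NiceLie.

Definition logsign (R : realType) (x : R) : 'F_2 := if x < 0 then 1 else 0.

Definition powvec (R : realType) (m : nat) (X : 'cV[R]_m) (alpha : 'rV[R]_m) : R :=
  \prod_(j < m) (`|X j 0| `^ (alpha 0 j)).

(* The nice diagram of a nilpotent Lie algebra has no 2-cycles: if [C y a l * C x l a]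
   were nonzero, (ad e_x ad e_y)^p e_a would be a nonzero multiple of e_a for every p.
   Hence the Christoffel symbols Γ_al^a vanish and the Ricci operator of a diagonal
   metric g is diagonal, with Ric e_b = 1/2 (M_Δ^T X_g)_b e_b, where X_g carries
   c_ijk^2 g_k / (g_i g_j) on the arrow i -j-> k.  So Ric = k/2 id is (K) for X = X_g;
   (H) is clear, (L) holds as logsign X_g = M_Δ,2 logsign g, and (P) as
   log|X_g| = 2 log|c| + M_Δ log|g| while α M_Δ = 0.  Conversely, (P) says that
   log|X| - 2 log|c| is killed by ker M_Δ^T, so it is M_Δ y, and g_l = ±exp y_l
   with the signs δ has X_g = X. *)

From HB Require Import structures.
From mathcomp Require Import all_boot all_order all_algebra.
From mathcomp Require Import reals sequences exp.
From mathcomp Require Import ring lra.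
Set Implicit Arguments. Unset Strict Implicit. Unset Printing Implicit Defensive.
Import Order.TTheory GRing.Theory Num.Theory.
Local Open Scope ring_scope.

Section IndicatorSums.
Variables (R : pzRingType) (n : nat).
Implicit Types (b : 'I_n) (h : 'I_n -> R).

Lemma sum_indicator b h : \sum_k (b == k)%:R * h k = h b.
Proof.
rewrite (bigD1 b) //= eqxx mul1r big1 ?addr0 // => k kb.
by rewrite eq_sym (negbTE kb) mul0r.
Qed.

Lemma sum_root_indicator b (w : 'I_n -> 'I_n -> 'I_n -> R) :
  \sum_k \sum_i \sum_j ((b == k)%:R - (b == i)%:R - (b == j)%:R) * w k i j =
  \sum_i \sum_j w b i j - \sum_k \sum_j w k b j - \sum_k \sum_i w k i b.
Proof.
transitivity (\sum_k \sum_i \sum_j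
  ((b == k)%:R * w k i j - (b == i)%:R * w k i j - (b == j)%:R * w k i j)).
  by do 3!(apply: eq_bigr => ? _); rewrite !mulrBl.
under eq_bigr => k _ do under eq_bigr => i _ do rewrite !sumrB.
under eq_bigr => k _ do rewrite !sumrB; rewrite !sumrB.
congr (_ - _ - _).
- rewrite -(sum_indicator b (fun k => \sum_i \sum_j w k i j)).
  by apply: eq_bigr => k _; rewrite mulr_sumr; apply: eq_bigr => i _; rewrite mulr_sumr.
- apply: eq_bigr => k _; rewrite -(sum_indicator b (fun i => \sum_j w k i j)).
  by apply: eq_bigr => i _; rewrite mulr_sumr.
- by apply: eq_bigr => k _; apply: eq_bigr => i _; rewrite sum_indicator.
Qed.

End IndicatorSums.

Section SymmetricSums.
Variables (R : numFieldType) (n : nat).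
Implicit Types F G S : 'I_n -> 'I_n -> R.

Lemma sum_sym_eq F G : (forall a l, F a l + F l a = G a l + G l a) ->
  \sum_a \sum_l F a l = \sum_a \sum_l G a l.
Proof.
have sum2 (H : 'I_n -> 'I_n -> R) : (\sum_a \sum_l H a l) *+ 2 = \sum_a \sum_l (H a l + H l a).
  rewrite mulr2n [X in _ + X]exchange_big -big_split.
  by apply: eq_bigr => a _; rewrite -big_split.
move=> FG; apply: (pmulrnI (isT : (0 < 2)%N)); rewrite /= !sum2.
by apply: eq_bigr => a _; apply: eq_bigr => l _.
Qed.

Lemma sum_ltn_half S : (forall i j, S i j = S j i) -> (forall i, S i i = 0) ->
  \sum_(i < n) \sum_(j < n | (i < j)%N) S i j = (\sum_i \sum_j S i j) / 2.
Proof.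
move=> S_sym S_diag0.
have sum_gtn : \sum_(i < n) \sum_(j < n | (j < i)%N) S i j =
               \sum_(i < n) \sum_(j < n | (i < j)%N) S i j.
  rewrite (exchange_big_dep xpredT) //=; apply: eq_bigr => i _.
  by apply: eq_bigr => j _; apply: S_sym.
have sum_split : \sum_i \sum_j S i j = \sum_(i < n) \sum_(j < n | (i < j)%N) S i j +
                 \sum_(i < n) \sum_(j < n | (j < i)%N) S i j.
  rewrite -big_split; apply: eq_bigr => i _ /=.
  rewrite [X in _ = X + _]big_mkcond [X in _ = _ + X]big_mkcond -big_split.
  apply: eq_bigr => j _ /=.
  by case: ltngtP => [_|_|/val_inj ->]; rewrite ?S_diag0 ?addr0 ?add0r.
by rewrite sum_split sum_gtn; field.
Qed.

End SymmetricSums.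

Lemma mul_single_support0 (T : eqType) (V : pzRingType) (f : T -> V) h b c :
  (forall x, x != h -> f x = 0) -> b != c -> f b * f c = 0.
Proof.
move=> fh bc; have [bh|/fh->] := eqVneq b h; last by rewrite mul0r.
by rewrite (fh c) ?mulr0 // -bh eq_sym.
Qed.

Lemma mulmx_solvable (F : fieldType) m n (A : 'M[F]_(m, n)) (w : 'cV_m) :
  kermx A *m w = 0 -> exists y, A *m y = w.
Proof.
move=> ker_w.
have /submxP[D cokerD] : ((cokermx A^T)^T <= kermx A)%MS.
  by apply/sub_kermxP; rewrite -[A in _ *m A]trmxK -trmx_mul mulmx_coker trmx0.
have /submxP[y wy] : (w^T <= A^T)%MS.
  by rewrite submxE -[_ *m _]trmxK trmx_mul trmxK cokerD -mulmxA ker_w mulmx0 trmx0.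
by exists y^T; rewrite -[w]trmxK wy trmx_mul trmxK.
Qed.

Section LogSign.
Variable R : realType.
Implicit Types x y t : R.

Lemma logsignM x y : x != 0 -> y != 0 -> logsign (x * y) = logsign x + logsign y.
Proof.
move=> x0 y0; rewrite /logsign mulr_lt0 x0 y0.
by case: (x < 0); case: (y < 0); apply/eqP.
Qed.

Lemma logsignV x : logsign x^-1 = logsign x.
Proof. by rewrite /logsign invr_lt0. Qed.

Lemma logsign_sqr x : logsign (x ^+ 2) = 0.
Proof. by rewrite /logsign ltNge sqr_ge0. Qed.

Lemma logsign_ln_norm_inj x y : x != 0 -> y != 0 ->
  ln `|x| = ln `|y| -> logsign x = logsign y -> x = y.
Proof.
move=> x0 y0 /ln_inj; rewrite !posrE !normr_gt0 => /(_ x0 y0) xy; rewrite /logsign.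
have [x_lt0|x_ge0] := ltP x 0; have [y_lt0|y_ge0] := ltP y 0 => // _.
- by apply: oppr_inj; rewrite -(ltr0_norm x_lt0) -(ltr0_norm y_lt0).
- by rewrite -(ger0_norm x_ge0) -(ger0_norm y_ge0).
Qed.

Definition signed_expR (s : 'F_2) t : R := (if s == 1 then -1 else 1) * expR t.

Lemma signed_expR_neq0 s t : signed_expR s t != 0.
Proof.
apply: mulf_neq0; last by rewrite gt_eqF ?expR_gt0.
by case: ifP; rewrite ?oppr_eq0 oner_eq0.
Qed.

Lemma logsign_signed_expR s t : logsign (signed_expR s t) = s.
Proof.
rewrite /signed_expR /logsign; case: s => [[|[|//]] s2]; apply/val_inj => /=.
- by rewrite mul1r ltNge ltW ?expR_gt0.
- by rewrite mulN1r oppr_lt0 expR_gt0.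
Qed.

Lemma ln_norm_signed_expR s t : ln `|signed_expR s t| = t.
Proof.
rewrite /signed_expR.
by case: ifP => _; rewrite ?mulN1r ?mul1r ?normrN gtr0_norm ?expR_gt0 // expRK.
Qed.

Definition ln_norm {m} (X : 'cV[R]_m) : 'cV[R]_m := map_mx (fun x => ln `|x|) X.

Lemma powvec_expR m (X : 'cV[R]_m) (u : 'rV[R]_m) : (forall j, X j 0 != 0) ->
  powvec X u = expR ((u *m ln_norm X) 0 0).
Proof.
move=> X_neq0; rewrite mxE expR_sum; apply: eq_bigr => j _.
by rewrite mxE /powR normr_eq0 (negbTE (X_neq0 j)) mulrC.
Qed.

Lemma powvec_rowsP r m (A : 'M[R]_(r, m)) (X Y : 'cV[R]_m) (s : R) :
  (forall j, X j 0 != 0) -> (forall j, Y j 0 != 0) ->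
  (forall i, powvec X (row i A) = powvec Y (s *: row i A)) <->
  A *m (ln_norm X - s *: ln_norm Y) = 0.
Proof.
move=> X_neq0 Y_neq0.
have rowE i : ((s *: row i A) *m ln_norm Y) 0 0 = (s *: (A *m ln_norm Y)) i 0.
  by rewrite -scalemxAl -row_mul !mxE.
split=> [XY | AXY i].
  apply/colP => i; move: (XY i); rewrite !powvec_expR // => /expR_inj.
  by rewrite rowE -row_mul mulmxBr scalemxAr !mxE => ->; rewrite subrr.
rewrite !powvec_expR // rowE -row_mul; congr expR; apply/eqP; rewrite -subr_eq0.
by move/colP: AXY => /(_ i); rewrite mulmxBr scalemxAr !mxE => ->.
Qed.

End LogSign.

Section Arrows.
Variables (R : realType) (n : nat) (C : 'I_n -> 'I_n -> 'I_n -> R).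
Local Notation m := (m_arrows C).
Implicit Type a : 'I_m.

Lemma sum_arrows (f : ('I_n * 'I_n) * 'I_n -> R) :
  \sum_(a < m) f (arrow a) =
  \sum_(k < n) \sum_(i < n) \sum_(j < n | (i < j)%N && (C i j k != 0)) f ((k, i), j).
Proof.
transitivity (\sum_(t <- arrows C) f t); first exact: esym (big_tnth _ _ _ _ _).
rewrite big_filter big_enum_cond pair_bigA pair_big_dep /=.
by apply: eq_bigr => [[[k i] j]].
Qed.

Lemma arrow_neq0 a : C (arrow a).1.2 (arrow a).2 (arrow a).1.1 != 0.
Proof. by have := mem_tnth a (in_tuple (arrows C)); rewrite mem_filter => /andP[/andP[]]. Qed.

Lemma struct_const_neq0 a : struct_const C a 0 != 0.
Proof. by rewrite mxE oppr_eq0 arrow_neq0. Qed.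

Lemma int_root_mx_mulE (V : pzRingType) (v : 'cV[V]_n) a :
  (map_mx intr (root_mx_int C) *m v) a 0 =
  v (arrow a).1.1 0 - v (arrow a).1.2 0 - v (arrow a).2 0.
Proof.
rewrite mxE -!(sum_indicator _ (fun l => v l 0)) -!sumrB; apply: eq_bigr => l _.
by rewrite !mxE !intrB !mulrz_nat ![l == _]eq_sym !mulrBl.
Qed.

Lemma root_mx_mulE (v : 'cV[R]_n) a :
  (root_mx C *m v) a 0 = v (arrow a).1.1 0 - v (arrow a).1.2 0 - v (arrow a).2 0.
Proof. exact: int_root_mx_mulE. Qed.

Lemma root_mx2_mulE (v : 'cV['F_2]_n) a :
  (root_mx2 C *m v) a 0 = v (arrow a).1.1 0 + v (arrow a).1.2 0 + v (arrow a).2 0.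
Proof. by rewrite int_root_mx_mulE !(oppr_pchar2 (pchar_Fp (isT : prime 2))). Qed.

End Arrows.

Section NiceNilpotent.
Variables (R : realType) (n : nat) (C : 'I_n -> 'I_n -> 'I_n -> R).
Hypothesis C_anti : forall i j l, C i j l = - C j i l.
Hypothesis C_nice : nice_basis C.
Hypothesis C_nil : nilpotent_lie C.
Local Notation e a := (delta_mx 0 a : 'rV[R]_n).

Lemma C_self0 i l : C i i l = 0.
Proof. by have := C_anti i i l; lra. Qed.

Lemma lieb_basis x a : lieb C (e x) (e a) = \row_l C x a l.
Proof.
apply/rowP => l; rewrite !mxE (bigD1 x) //= [X in _ + X]big1; last first.
  by move=> i /negbTE ix; apply: big1 => j _; rewrite !mxE ix !mul0r.
rewrite addr0 (bigD1 a) //= [X in _ + X]big1; last first.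
  by move=> j /negbTE ja; rewrite !mxE ja mulr0 mul0r.
by rewrite !mxE !eqxx !mul1r addr0.
Qed.

Lemma liebZr u s v : lieb C u (s *: v) = s *: lieb C u v.
Proof.
apply/rowP => l; rewrite !mxE mulr_sumr; apply: eq_bigr => i _.
by rewrite mulr_sumr; apply: eq_bigr => j _; rewrite !mxE; ring.
Qed.

Lemma lieb_basis_nice x a l : C x a l != 0 -> lieb C (e x) (e a) = C x a l *: e l.
Proof.
move=> xal_neq0; have [h Ch0] := C_nice.1 x a.
have lh : l = h by apply/eqP; apply: contraNT xal_neq0 => /Ch0 ->.
apply/rowP => l'; rewrite lieb_basis !mxE /=.
have [->|l'l] := eqVneq l' l; first by rewrite mulr1.
by rewrite mulr0 Ch0 // -lh.
Qed.

Lemma no_two_cycle x y a l : C y a l * C x l a = 0.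
Proof.
apply/eqP; apply: contraT; rewrite mulf_eq0 negb_or => /andP[yal_neq0 xla_neq0].
pose xy p := flatten (nseq p [:: e x; e y]).
have ad_xy p : foldr (lieb C) (e a) (xy p) = (C y a l * C x l a) ^+ p *: e a.
  elim: p => [|p IHp]; first by rewrite scale1r.
  rewrite /= IHp !liebZr (lieb_basis_nice yal_neq0) liebZr (lieb_basis_nice xla_neq0).
  by rewrite !scalerA exprS; congr (_ *: _); ring.
have [N nilN] := C_nil.
have size_xy : size (xy N) = (N + N)%N.
  by rewrite size_flatten /shape map_nseq sumn_nseq /= mul2n addnn.
have : foldr (lieb C) (e a) (xy N) = 0.
  rewrite -(cat_take_drop N (xy N)) foldr_cat; apply: nilN.
  by rewrite size_takel // size_xy leq_addr.
rewrite ad_xy => /rowP/(_ a); rewrite !mxE !eqxx mulr1 /= => /eqP.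
by rewrite expf_eq0 mulf_eq0 (negbTE yal_neq0) (negbTE xla_neq0) andbF.
Qed.

Lemma C_loop0 l a : C l a a = 0.
Proof. by have /eqP := no_two_cycle l l a a; rewrite mulf_eq0 orbb => /eqP. Qed.

End NiceNilpotent.

Section DiagonalMetric.
Variables (R : realType) (n : nat) (C : 'I_n -> 'I_n -> 'I_n -> R).
Hypothesis C_anti : forall i j l, C i j l = - C j i l.
Hypothesis C_nice : nice_basis C.
Hypothesis C_nil : nilpotent_lie C.
Variable g : 'I_n -> R.
Hypothesis g_neq0 : forall i, g i != 0.

Lemma christoffel_loop0 a l : christoffel C g a l a = 0.
Proof.
rewrite /christoffel (C_anti a l a) !(C_loop0 C_nice C_nil) (C_self0 C_anti).
by rewrite oppr0 !mul0r subrr addr0 mul0r.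
Qed.

Definition ric_summand b c a l :=
  christoffel C g b c l * christoffel C g a l a - christoffel C g a c l * christoffel C g b l a
  - C a b l * christoffel C g l c a.

Definition ric_reduced b c a l :=
  - (C b a l * C c a l * g l / g a) / 2 + C l a b * C l a c * g b * g c / (g l * g a) / 4.

(* Only true because the two-cycle products [C b a l * C c l a] and [C c a l * C b l a] vanish. *)
Lemma ric_summand_sym b c a l :
  ric_summand b c a l + ric_summand b c l a = ric_reduced b c a l + ric_reduced b c l a.
Proof.
rewrite /ric_summand /ric_reduced !christoffel_loop0 !mulr0 !sub0r /christoffel.
rewrite [C a c l]C_anti [C l c a]C_anti [C l a c]C_anti [C l b a]C_anti.
rewrite [C l a b]C_anti [C a b l]C_anti.
have ga := g_neq0 a; have gl := g_neq0 l; have gb := g_neq0 b; have gc := g_neq0 c.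
have /eqP := no_two_cycle C_nice C_nil c b a l; have /eqP := no_two_cycle C_nice C_nil b c a l.
by rewrite !mulf_eq0 => /orP[]/eqP-> /orP[]/eqP->; field; rewrite ?ga ?gl ?gb ?gc.
Qed.

Lemma ricE b c : ric C g b c = \sum_a \sum_l ric_reduced b c a l.
Proof. exact: sum_sym_eq (ric_summand_sym b c). Qed.

Lemma ric_offdiag b c : b != c -> ric C g b c = 0.
Proof.
move=> bc; rewrite ricE big1 // => a _; rewrite big1 // => l _.
have [h Ch0] := C_nice.1 l a; have [h' C'h0] := C_nice.2 a l.
rewrite /ric_reduced.
have -> : C l a b * C l a c = 0 by exact: mul_single_support0 Ch0 bc.
have -> : C b a l * C c a l = 0.
  by rewrite !(C_anti _ a) mulrNN; exact: mul_single_support0 C'h0 bc.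
by rewrite !(mul0r, oppr0, add0r).
Qed.

Definition arrow_weight k i j := C i j k ^+ 2 * g k / (g i * g j).

Definition arrow_weights : 'cV[R]_(m_arrows C) :=
  \col_a arrow_weight (arrow a).1.1 (arrow a).1.2 (arrow a).2.

Lemma arrow_weightC k i j : arrow_weight k i j = arrow_weight k j i.
Proof. by rewrite /arrow_weight C_anti sqrrN (mulrC (g i)). Qed.

Lemma tr_root_mx_weightsE b : ((root_mx C)^T *m arrow_weights) b 0 =
  (\sum_i \sum_j arrow_weight b i j - \sum_k \sum_j arrow_weight k b j
   - \sum_k \sum_i arrow_weight k i b) / 2.
Proof.
pose f t := ((b == t.1.1)%:R - (b == t.1.2)%:R - (b == t.2)%:R) *
            arrow_weight t.1.1 t.1.2 t.2.
transitivity (\sum_(a < m_arrows C) f (arrow a)).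
  by rewrite mxE; apply: eq_bigr => a _; rewrite !mxE !intrB !mulrz_nat.
rewrite sum_arrows -sum_root_indicator mulr_suml; apply: eq_bigr => k _.
rewrite -sum_ltn_half => [|i j|i]; last 2 first.
- by rewrite arrow_weightC addrAC.
- by rewrite /arrow_weight (C_self0 C_anti) expr0n !mul0r mulr0.
apply: eq_bigr => i _; rewrite big_mkcondr; apply: eq_bigr => j _ /=.
by case: eqP => [Cijk0|//]; rewrite /f /arrow_weight Cijk0 expr0n !mul0r mulr0.
Qed.

Lemma ric_diag b : ric C g b b / g b = ((root_mx C)^T *m arrow_weights) b 0 / 2.
Proof.
rewrite ricE tr_root_mx_weightsE.
under [\sum_k \sum_i arrow_weight k i b]eq_bigr do under eq_bigr do rewrite arrow_weightC.
rewrite [\sum_k \sum_j arrow_weight k b j]exchange_big -!sumrB !mulr_suml.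
apply: eq_bigr => a _; rewrite -!sumrB !mulr_suml; apply: eq_bigr => l _.
by rewrite /ric_reduced /arrow_weight (C_anti l a b); field; rewrite ?g_neq0.
Qed.

Lemma ricci_opP k : ricci_op C g = (k / 2)%:M <-> (root_mx C)^T *m arrow_weights = const_mx k.
Proof.
split=> [Ric_k | MX_k].
  apply/colP => b; have Ric_bb := congr1 (fun A : 'M_n => A b b) Ric_k.
  by rewrite !mxE eqxx mulr1n ric_diag in Ric_bb; rewrite [RHS]mxE; lra.
apply/matrixP => c b; rewrite !mxE; have [<-|cb] := eqVneq c b.
  by rewrite mulr1n ric_diag MX_k mxE.
by rewrite ric_offdiag 1?eq_sym // mul0r mulr0n.
Qed.

End DiagonalMetric.

Section ArrowWeights.
Variables (R : realType) (n : nat) (C : 'I_n -> 'I_n -> 'I_n -> R).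
Local Notation W g := (arrow_weights C g).

Lemma arrow_weights_neq0 g : (forall i, g i != 0) -> forall a, W g a 0 != 0.
Proof.
move=> g_neq0 a; rewrite mxE; apply: mulf_neq0; last by rewrite invr_eq0 mulf_neq0.
by rewrite mulf_neq0 // expf_neq0 // arrow_neq0.
Qed.

Lemma logsign_arrow_weights g : (forall i, g i != 0) ->
  map_mx (@logsign R) (W g) = root_mx2 C *m \col_l logsign (g l).
Proof.
move=> g_neq0; apply/colP => a; rewrite root_mx2_mulE !mxE.
have C2_neq0 := expf_neq0 2 (arrow_neq0 a); have gg_neq0 i j := mulf_neq0 (g_neq0 i) (g_neq0 j).
rewrite (logsignM (mulf_neq0 C2_neq0 (g_neq0 _))) ?invr_eq0 // logsignV.
by rewrite logsignM // logsignM // logsign_sqr add0r addrA.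
Qed.

Lemma ln_norm_arrow_weights g : (forall i, g i != 0) ->
  ln_norm (W g) = 2 *: ln_norm (struct_const C) + root_mx C *m \col_l ln `|g l|.
Proof.
move=> g_neq0; apply/colP => a; rewrite [RHS]mxE root_mx_mulE !mxE normrN.
have C_pos : 0 < `|C (arrow a).1.2 (arrow a).2 (arrow a).1.1| by rewrite normr_gt0 arrow_neq0.
have g_pos i : 0 < `|g i| by rewrite normr_gt0.
have gg_pos i j : 0 < `|g i| * `|g j| by rewrite mulr_gt0.
rewrite !normrM normfV normrM !lnM ?lnV ?lnM ?posrE ?mulr_gt0 ?invr_gt0 //; ring.
Qed.

Lemma arrow_weights_signed_expR (X : 'cV[R]_(m_arrows C)) (y : 'cV[R]_n)
    (delta : 'cV['F_2]_n) :
  (forall a, X a 0 != 0) ->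
  root_mx C *m y = ln_norm X - 2 *: ln_norm (struct_const C) ->
  map_mx (@logsign R) X = root_mx2 C *m delta ->
  W (fun l => signed_expR (delta l 0) (y l 0)) = X.
Proof.
move=> X_neq0 My X_sign; set g := fun l => _.
have g_neq0 l : g l != 0 by exact: signed_expR_neq0.
have ln_g : \col_l ln `|g l| = y.
  by apply/colP => l; rewrite mxE ln_norm_signed_expR.
have ln_W : ln_norm (W g) = ln_norm X.
  by rewrite ln_norm_arrow_weights // ln_g My addrC subrK.
have sign_W : map_mx (@logsign R) (W g) = map_mx (@logsign R) X.
  rewrite logsign_arrow_weights // X_sign; congr (_ *m _).
  by apply/colP => l; rewrite mxE logsign_signed_expR.
apply/colP => a; apply: logsign_ln_norm_inj; rewrite ?(arrow_weights_neq0 g_neq0) //.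
- by have /colP/(_ a) := ln_W; rewrite !mxE.
- by have /colP/(_ a) := sign_W; rewrite !mxE.
Qed.

End ArrowWeights.

Theorem theorem2p1 (R : realType) (n : nat) (C : 'I_n -> 'I_n -> 'I_n -> R)
  (hlie : is_lie C) (hnice : nice_basis C) (hnil : nilpotent_lie C)
  (k : R) (delta : 'cV['F_2]_n)
  (r : nat) (alpha : 'M[R]_(r, m_arrows C))
  (halpha : row_free alpha && (alpha == kermx (root_mx C))%MS) :
  (exists g : 'I_n -> R,
      (forall i, g i != 0) /\ (forall i, logsign (g i) = delta i 0) /\
      ricci_op C g = (k / 2)%:M)
  <->
  (exists X : 'cV[R]_(m_arrows C),
      (root_mx C)^T *m X = const_mx k /\
      (forall a, X a 0 != 0) /\
      map_mx (@logsign R) X = root_mx2 C *m delta /\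
      (forall i : 'I_r, powvec X (row i alpha) = powvec (struct_const C) (2 *: row i alpha))).
Proof.
have C_anti : forall i j l, C i j l = - C j i l by case: hlie.
have /andP[_ /andP[alpha_ker ker_alpha]] := halpha.
have c_neq0 := @struct_const_neq0 R n C.
split=> [[g [g_neq0 [g_sign Ric]]] | [X [MX [X_neq0 [X_sign X_pow]]]]].
- have g_delta : \col_l logsign (g l) = delta by apply/colP => l; rewrite mxE g_sign.
  exists (arrow_weights C g); split; first exact/(ricci_opP C_anti hnice hnil g_neq0).
  split; first exact: arrow_weights_neq0 g_neq0.
  split; first by rewrite logsign_arrow_weights // g_delta.
  apply/(powvec_rowsP _ _ (arrow_weights_neq0 g_neq0) c_neq0).
  by rewrite ln_norm_arrow_weights // addrC addKr mulmxA (sub_kermxP alpha_ker) mul0mx.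
- have /submxP[D kerD] := ker_alpha.
  have [y My] : exists y, root_mx C *m y = ln_norm X - 2 *: ln_norm (struct_const C).
    apply: mulmx_solvable; rewrite kerD -mulmxA.
    by have /(powvec_rowsP _ _ X_neq0 c_neq0) -> := X_pow; rewrite mulmx0.
  exists (fun l => signed_expR (delta l 0) (y l 0)).
  split; first by move=> l; apply: signed_expR_neq0.
  split; first by move=> l; apply: logsign_signed_expR.
  apply/(ricci_opP C_anti hnice hnil (fun l => signed_expR_neq0 _ _)).
  by rewrite (arrow_weights_signed_expR X_neq0 My X_sign).
Qed.
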